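(* Let $M$ be $\mathbb R^n$ or a compact rank-one symmetric space, and for $r>0$ let $h_r$ be the solution of $h_r''(h_r')^{n-1}=e^{h_r}\mathcal D_M(u)$ on $[0,r)$ with $\lim_{u\to r}h_r(u)=\infty$. Put $a_r=h_r(0)=\inf_{[0,r)}h_r$. Then $r\mapsto a_r$ is decreasing and $\lim_{r\to\infty}a_r=-\infty$.
   Context: $n\ge2$ is the real dimension of $M$; $u=\sqrt\rho$, $\rho(x,v)=4|v|^2$ on $TM$ with the adapted complex structure (defined on all of $TM$ in these cases). $\mathcal D_M(u)=u^{n-1}$ for $\mathbb R^n$; $(\sinh u)^{n-1}$ for the round sphere and real projective space; $2^{n-1}(\cosh\frac u2)^k(\sinh\frac u2)^{n-1}$, $k=1,3,7$, for complex projective space, quaternionic projective space, Cayley plane. Solutions are real-analytic in $u^2$ (so $h_r'(0)=0$). *)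

From Stdlib Require Import Reals Lra.
Open Scope R_scope.

Inductive ModelSpace : Set :=
  | Euclid
  | Sphere
  | RealProj
  | ComplexProj
  | QuatProj
  | CayleyPlane .

Definition valid_dim (M : ModelSpace) (n : nat) : Prop :=
  match M with
  | Euclid | Sphere | RealProj => (2 <= n)%nat
  | ComplexProj => exists m, (1 <= m)%nat /\ n = (2 * m)%nat
  | QuatProj => exists m, (1 <= m)%nat /\ n = (4 * m)%nat
  | CayleyPlane => n = 16%nat
  end.

Definition DM (M : ModelSpace) (n : nat) (u : R) : R :=
  match M with
  | Euclid => u ^ (n - 1)
  | Sphere | RealProj => (sinh u) ^ (n - 1)
  | ComplexProj => 2 ^ (n - 1) * (cosh (u / 2)) ^ 1 * (sinh (u / 2)) ^ (n - 1)
  | QuatProj => 2 ^ (n - 1) * (cosh (u / 2)) ^ 3 * (sinh (u / 2)) ^ (n - 1)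
  | CayleyPlane => 2 ^ (n - 1) * (cosh (u / 2)) ^ 7 * (sinh (u / 2)) ^ (n - 1)
  end.

(* h is a solution of h''(h')^{n-1} = e^h D_M(u) on [0,r), with h1, h2 its
   first and second derivatives (differentiable on (-r,r), as h is real-analytic
   in u^2, so in particular h'(0) = 0), and h(u) -> +infinity as u -> r^-. *)
Definition blowup_solution (M : ModelSpace) (n : nat) (r : R)
    (h h1 h2 : R -> R) : Prop :=
  (forall u, -r < u < r -> derivable_pt_lim h u (h1 u)) /\
  (forall u, -r < u < r -> derivable_pt_lim h1 u (h2 u)) /\
  h1 0 = 0 /\
  (forall u, 0 <= u < r -> h2 u * (h1 u) ^ (n - 1) = exp (h u) * DM M n u) /\
  (forall K, exists d, 0 < d /\ forall u, r - d < u < r -> K < h u).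

From Stdlib Require Import Reals Ranalysis5 Lra Lia.
Open Scope R_scope.

(* Let f = h_r, g = h_s and c >= 1 with c r < s. The rescaled function
   t |-> g (c t) satisfies the equation with right-hand side
   c^(n+1) e^g D(c t) >= c^(n+1) e^g D(t), as D is nondecreasing. Since
   ((y')^n)' = n (y')^(n-1) y'' and h' >= 0, a larger right-hand side forces a
   larger slope, so the gap g (c t) - f t never drops below its initial value
   while it stays above -(n+1) ln c. But the gap tends to -oo as t -> r, because
   f blows up at r while g (c t) stays bounded; hence a_s + (n+1) ln c <= a_r.
   Taking c slightly above 1 gives strict monotonicity, r = 1 and c -> oo the
   limit. *)

Lemma real_induction (f : R -> R) (a b c : R) :
  a <= b -> (forall x, a <= x <= b -> continuity_pt f x) -> c < f a ->
  (forall x, a < x <= b -> (forall t, a <= t < x -> c < f t) -> c < f x) ->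
  forall x, a <= x <= b -> c < f x.
Proof.
  intros Hab Hcont Ha Hstep.
  set (E := fun x => a <= x <= b /\ forall t, a <= t <= x -> c < f t).
  assert (HaE : E a).
  { split; [lra|]. intros t Ht. replace t with a by lra. exact Ha. }
  destruct (completeness E) as [y [Hub Hlub]].
  - exists b. intros x [Hx _]. lra.
  - exists a. exact HaE.
  - assert (Hay : a <= y) by (apply Hub; exact HaE).
    assert (Hyb : y <= b) by (apply Hlub; intros x [Hx _]; lra).
    assert (Hbelow : forall t, a <= t < y -> c < f t).
    { intros t Ht. destruct (Rlt_le_dec c (f t)) as [H|H]; [exact H|].
      enough (y <= t) by lra.
      apply Hlub. intros x [Hx Hxf].
      destruct (Rle_lt_dec x t) as [H1|H1]; [exact H1|].
      specialize (Hxf t ltac:(lra)). lra. }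
    assert (Hy : c < f y).
    { destruct (Req_dec y a) as [->|Hne]; [exact Ha|]. apply Hstep; [lra|exact Hbelow]. }
    destruct (Hcont y (conj Hay Hyb) (f y - c)) as [alp [Halp Hnear]]; [lra|].
    assert (Haround : forall t, Rabs (t - y) < alp -> c < f t).
    { intros t Ht. destruct (Req_dec t y) as [->|Hne]; [exact Hy|].
      assert (Hd : R_dist (f t) (f y) < f y - c) by (apply Hnear; repeat split; auto).
      unfold R_dist in Hd. apply Rabs_def2 in Hd. lra. }
    assert (Hyb' : y = b).
    { destruct (Req_dec y b) as [H|H]; [exact H|exfalso].
      set (z := Rmin b (y + alp / 2)).
      assert (y < z) by (apply Rmin_glb_lt; lra).
      assert (z <= b) by apply Rmin_l.
      assert (z <= y + alp / 2) by apply Rmin_r.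
      assert (E z).
      { split; [lra|]. intros t Ht. destruct (Rlt_le_dec t y); [apply Hbelow; lra|].
        apply Haround. rewrite Rabs_right; lra. }
      assert (z <= y) by (apply Hub; assumption). lra. }
    intros x Hx. destruct (Req_dec x b) as [->|Hne].
    + rewrite <- Hyb'. exact Hy.
    + apply Hbelow. lra.
Qed.

Lemma pow_lt_compat_l (x y : R) (k : nat) : 0 <= x < y -> x ^ S k < y ^ S k.
Proof.
  intros [Hx Hxy]. induction k as [|k IH]; [simpl; lra|].
  change (x * x ^ S k < y * y ^ S k).
  assert (0 <= x ^ S k) by (apply pow_le; lra).
  apply Rle_lt_trans with (x * y ^ S k).
  - apply Rmult_le_compat_l; lra.
  - apply Rmult_lt_compat_r; [apply pow_lt|]; lra.
Qed.

Lemma derivable_pt_lim_continuity_pt (f : R -> R) (x l : R) :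
  derivable_pt_lim f x l -> continuity_pt f x.
Proof. intros H. exact (derivable_continuous_pt f x (exist _ l H)). Qed.

Lemma derivable_pt_lim_pow_comp (f : R -> R) (x l : R) (k : nat) :
  derivable_pt_lim f x l ->
  derivable_pt_lim (fun t => f t ^ k) x (INR k * f x ^ pred k * l).
Proof.
  intros H. change (fun t => f t ^ k) with (comp (fun y => y ^ k) f).
  apply derivable_pt_lim_comp; [exact H|apply derivable_pt_lim_pow].
Qed.

Lemma derivable_pt_lim_scale (f : R -> R) (c t l : R) :
  derivable_pt_lim f (c * t) l -> derivable_pt_lim (fun x => f (c * x)) t (c * l).
Proof.
  intros H. change (fun x => f (c * x)) with (comp f (fun x => c * x)).
  rewrite Rmult_comm. apply derivable_pt_lim_comp; [|exact H].
  pose proof (derivable_pt_lim_scal id c t 1 (derivable_pt_lim_id t)) as Hc.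
  rewrite Rmult_1_r in Hc. exact Hc.
Qed.

Lemma derivative_nonneg_le (f f' : R -> R) (a x : R) :
  a <= x -> (forall t, a <= t <= x -> derivable_pt_lim f t (f' t)) ->
  (forall t, a < t < x -> 0 <= f' t) -> f a <= f x.
Proof.
  intros Hax Hd Hpos. destruct (Req_dec a x) as [->|Hne]; [lra|].
  destruct (MVT_cor2 f f' a x) as [t [Ht1 Ht2]]; [lra|exact Hd|].
  assert (0 <= f' t * (x - a)) by (apply Rmult_le_pos; [apply Hpos|]; lra).
  lra.
Qed.

Section Comparison.

Variables (m : nat) (b d : R) (P Q p1 q1 p2 q2 : R -> R).

Hypothesis P_deriv : forall u, 0 <= u <= b -> derivable_pt_lim P u (p1 u).
Hypothesis Q_deriv : forall u, 0 <= u <= b -> derivable_pt_lim Q u (q1 u).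
Hypothesis p1_deriv : forall u, 0 <= u <= b -> derivable_pt_lim p1 u (p2 u).
Hypothesis q1_deriv : forall u, 0 <= u <= b -> derivable_pt_lim q1 u (q2 u).
Hypothesis p1_nonneg : forall u, 0 <= u <= b -> 0 <= p1 u.
Hypothesis q1_nonneg : forall u, 0 <= u <= b -> 0 <= q1 u.
Hypothesis slope_le_at_0 : q1 0 <= p1 0.
Hypothesis power_slope_le :
  forall u, 0 <= u <= b -> - d < P u - Q u -> q1 u ^ m * q2 u <= p1 u ^ m * p2 u.

Lemma slope_le_while_gap_gt (x : R) :
  0 <= x <= b -> (forall t, 0 <= t < x -> - d < P t - Q t) ->
  forall t, 0 <= t <= x -> q1 t <= p1 t.
Proof.
  intros Hx Hgap t Ht.
  assert (Hpow : p1 0 ^ S m - q1 0 ^ S m <= p1 t ^ S m - q1 t ^ S m).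
  { apply (derivative_nonneg_le (fun y => p1 y ^ S m - q1 y ^ S m)
      (fun y => INR (S m) * p1 y ^ m * p2 y - INR (S m) * q1 y ^ m * q2 y)); [lra| |].
    - intros y Hy. apply derivable_pt_lim_minus;
        apply derivable_pt_lim_pow_comp; [apply p1_deriv|apply q1_deriv]; lra.
    - intros y Hy.
      assert (q1 y ^ m * q2 y <= p1 y ^ m * p2 y) by (apply power_slope_le, Hgap; lra).
      assert (0 <= INR (S m)) by apply pos_INR.
      nra. }
  assert (q1 0 ^ S m <= p1 0 ^ S m) by (apply pow_incr; split; [apply q1_nonneg; lra|exact slope_le_at_0]).
  destruct (Rle_lt_dec (q1 t) (p1 t)) as [Hle|Hlt]; [exact Hle|].
  assert (p1 t ^ S m < q1 t ^ S m) by (apply pow_lt_compat_l; split; [apply p1_nonneg; lra|exact Hlt]).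
  lra.
Qed.

Lemma gap_ge_while_gap_gt (x : R) :
  0 <= x <= b -> (forall t, 0 <= t < x -> - d < P t - Q t) ->
  forall t, 0 <= t <= x -> P 0 - Q 0 <= P t - Q t.
Proof.
  intros Hx Hgap t Ht.
  apply (derivative_nonneg_le (fun y => P y - Q y) (fun y => p1 y - q1 y)); [lra| |].
  - intros y Hy. apply derivable_pt_lim_minus; [apply P_deriv|apply Q_deriv]; lra.
  - intros y Hy. assert (q1 y <= p1 y) by (apply (slope_le_while_gap_gt x Hx Hgap); lra). lra.
Qed.

Lemma comparison_principle :
  - d < P 0 - Q 0 -> forall u, 0 <= u <= b -> P 0 - Q 0 <= P u - Q u.
Proof.
  intros Hgap0 u Hu.
  assert (Hgap : forall x, 0 <= x <= b -> - d < P x - Q x).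
  { apply (real_induction (fun x => P x - Q x)); [lra| |exact Hgap0|].
    - intros x Hx. apply (derivable_pt_lim_continuity_pt _ _ (p1 x - q1 x)).
      apply derivable_pt_lim_minus; [apply P_deriv|apply Q_deriv]; lra.
    - intros x Hx Hbelow.
      assert (P 0 - Q 0 <= P x - Q x) by (apply (gap_ge_while_gap_gt x); lra || auto).
      lra. }
  apply (gap_ge_while_gap_gt b); [lra| |exact Hu].
  intros t Ht. apply Hgap. lra.
Qed.

End Comparison.

Definition nonneg_nondecreasing (F : R -> R) : Prop :=
  forall x y, 0 <= x <= y -> 0 <= F x <= F y.

Section BlowupSolutions.

Variables (D : R -> R) (m : nat).

(* [blowup_solution M n] is convertible to [blowup_solution_of (DM M n) (n - 1)]. *)
Definition blowup_solution_of (r : R) (h h1 h2 : R -> R) : Prop :=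
  (forall u, -r < u < r -> derivable_pt_lim h u (h1 u)) /\
  (forall u, -r < u < r -> derivable_pt_lim h1 u (h2 u)) /\
  h1 0 = 0 /\
  (forall u, 0 <= u < r -> h2 u * (h1 u) ^ m = exp (h u) * D u) /\
  (forall K, exists d, 0 < d /\ forall u, r - d < u < r -> K < h u).

Hypothesis D_pos : forall u, 0 < u -> 0 < D u.
Hypothesis D_mono : nonneg_nondecreasing D.

Section OneSolution.

Variables (r : R) (h h1 h2 : R -> R).
Hypothesis sol : blowup_solution_of r h h1 h2.

Lemma blowup_eventually_above (K a : R) : a < r -> exists u, a < u < r /\ K < h u.
Proof.
  intros Ha. destruct sol as (_ & _ & _ & _ & Hblow).
  destruct (Hblow K) as [d [Hd Hdh]].
  set (u := Rmax (r - d / 2) ((a + r) / 2)).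
  assert (r - d / 2 <= u) by apply Rmax_l.
  assert ((a + r) / 2 <= u) by apply Rmax_r.
  assert (u < r) by (apply Rmax_lub_lt; lra).
  exists u. split; [lra|]. apply Hdh. lra.
Qed.

Lemma blowup_solution_pow_deriv_pos (u : R) : 0 < u < r -> 0 < h1 u ^ S m.
Proof.
  intros Hu. destruct sol as (_ & dh1 & h1_0 & Heq & _).
  destruct (MVT_cor2 (fun t => h1 t ^ S m) (fun t => INR (S m) * h1 t ^ m * h2 t) 0 u)
    as [t [Hdiff Ht]]; [lra|intros t Ht; apply derivable_pt_lim_pow_comp, dh1; lra|].
  rewrite h1_0, pow_i in Hdiff by lia.
  assert (0 < h2 t * h1 t ^ m) by (rewrite Heq by lra; apply Rmult_lt_0_compat;
                                    [apply exp_pos|apply D_pos; lra]).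
  assert (0 < INR (S m)) by (apply lt_0_INR; lia).
  assert (0 < INR (S m) * (h2 t * h1 t ^ m) * u) by (apply Rmult_lt_0_compat; [nra|lra]).
  lra.
Qed.

(* For even n the sign of h' is not forced by the equation: a negative
   derivative would make h decrease, which the blow-up at r rules out. *)
Lemma blowup_solution_deriv_pos (u : R) : 0 < u < r -> 0 < h1 u.
Proof.
  intros Hu. destruct sol as (dh & dh1 & _ & _ & _).
  assert (Hneq0 : forall t, 0 < t < r -> h1 t <> 0).
  { intros t Ht Hz. pose proof (blowup_solution_pow_deriv_pos t Ht).
    rewrite Hz, pow_i in * by lia. lra. }
  destruct (Rlt_le_dec 0 (h1 u)) as [Hpos|Hle]; [exact Hpos|exfalso].
  assert (Hneg : h1 u < 0) by (pose proof (Hneq0 u Hu); lra).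
  assert (Hneg_after : forall t, u <= t < r -> h1 t < 0).
  { intros t Ht. destruct (Rlt_le_dec (h1 t) 0) as [H|H]; [exact H|exfalso].
    assert (Hut : u < t) by (destruct (Req_dec u t) as [<-|]; lra).
    destruct (Req_dec (h1 t) 0) as [Hz|Hnz]; [apply (Hneq0 t); lra|].
    destruct (IVT_interv h1 u t) as [z [Hz Hhz]]; [|exact Hut|exact Hneg|lra|].
    - intros y Hy. apply (derivable_pt_lim_continuity_pt _ _ (h2 y)), dh1. lra.
    - apply (Hneq0 z); lra. }
  destruct (blowup_eventually_above (h u) u) as [v [Hv Hhv]]; [lra|].
  assert (- h u <= - h v).
  { apply (derivative_nonneg_le (fun y => - h y) (fun y => - h1 y)); [lra| |].
    - intros y Hy. apply derivable_pt_lim_opp, dh. lra.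
    - intros y Hy. assert (h1 y < 0) by (apply Hneg_after; lra). lra. }
  lra.
Qed.

Lemma blowup_solution_deriv_nonneg (u : R) : 0 <= u < r -> 0 <= h1 u.
Proof.
  intros Hu. destruct (Req_dec u 0) as [->|Hne].
  - destruct sol as (_ & _ & -> & _). lra.
  - left. apply blowup_solution_deriv_pos. lra.
Qed.

Lemma blowup_solution_nondecreasing (x y : R) : 0 <= x -> x <= y -> y < r -> h x <= h y.
Proof.
  intros Hx Hxy Hy. destruct sol as (dh & _).
  apply (derivative_nonneg_le h h1); [lra| |].
  - intros t Ht. apply dh. lra.
  - intros t Ht. apply blowup_solution_deriv_nonneg. lra.
Qed.

End OneSolution.

Lemma exp_density_le (c t a b : R) :
  1 <= c -> 0 <= t -> a - b < INR (S (S m)) * ln c ->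
  exp a * D t <= c ^ S (S m) * (exp b * D (c * t)).
Proof.
  intros Hc Ht Hab.
  assert (Hexp : exp a < c ^ S (S m) * exp b).
  { rewrite <- (exp_ln (c ^ S (S m))) by (apply pow_lt; lra).
    rewrite <- exp_plus, ln_pow by lra. apply exp_increasing. lra. }
  assert (HD : 0 <= D t <= D (c * t)) by (apply D_mono; nra).
  pose proof (exp_pos a).
  rewrite <- Rmult_assoc. apply Rmult_le_compat; lra.
Qed.

Lemma blowup_solution_value_at_0_scaling (r s c : R) (f f1 f2 g g1 g2 : R -> R) :
  0 < r -> blowup_solution_of r f f1 f2 -> blowup_solution_of s g g1 g2 ->
  1 <= c -> c * r < s -> g 0 + INR (S (S m)) * ln c <= f 0.
Proof.
  intros Hr solf solg Hc Hcr.
  assert (Hs : 0 < s) by nra.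
  destruct (Rle_lt_dec (g 0 + INR (S (S m)) * ln c) (f 0)) as [Hle|Hgt]; [exact Hle|exfalso].
  destruct (blowup_eventually_above r f f1 f2 solf (g (c * r) - (g 0 - f 0)) 0)
    as [u [Hu Hfu]]; [exact Hr|].
  pose proof solf as (df & df1 & f1_0 & Heqf & _).
  pose proof solg as (dg & dg1 & g1_0 & Heqg & _).
  assert (Hcu : forall t, 0 <= t <= u -> 0 <= c * t < s) by (intros t Ht; split; nra).
  assert (Hgap : g (c * 0) - f 0 <= g (c * u) - f u).
  { apply (comparison_principle m u (INR (S (S m)) * ln c) (fun t => g (c * t)) f
      (fun t => c * g1 (c * t)) f1 (fun t => c * (c * g2 (c * t))) f2).
    - intros t Ht. apply derivable_pt_lim_scale, dg. pose proof (Hcu t Ht). lra.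
    - intros t Ht. apply df. lra.
    - intros t Ht. apply (derivable_pt_lim_scal (fun t => g1 (c * t))).
      apply derivable_pt_lim_scale, dg1. pose proof (Hcu t Ht). lra.
    - intros t Ht. apply df1. lra.
    - intros t Ht. apply Rmult_le_pos; [lra|].
      apply (blowup_solution_deriv_nonneg s g g1 g2 solg). auto.
    - intros t Ht. apply (blowup_solution_deriv_nonneg r f f1 f2 solf). lra.
    - rewrite Rmult_0_r, f1_0, g1_0. lra.
    - intros t Ht Hgt_t. pose proof (Hcu t Ht).
      rewrite Rmult_comm, Heqf by lra.
      replace ((c * g1 (c * t)) ^ m * (c * (c * g2 (c * t))))
        with (c ^ S (S m) * (g2 (c * t) * g1 (c * t) ^ m))
        by (rewrite Rpow_mult_distr; simpl; ring).
      rewrite Heqg by lra. apply exp_density_le; lra.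
    - rewrite Rmult_0_r. lra.
    - lra. }
  assert (g (c * u) <= g (c * r)).
  { apply (blowup_solution_nondecreasing s g g1 g2 solg); nra. }
  rewrite Rmult_0_r in Hgap. lra.
Qed.

End BlowupSolutions.

Lemma nonneg_nondecreasing_mult (F G : R -> R) :
  nonneg_nondecreasing F -> nonneg_nondecreasing G ->
  nonneg_nondecreasing (fun u => F u * G u).
Proof.
  intros HF HG x y Hxy. destruct (HF x y Hxy), (HG x y Hxy).
  split; [apply Rmult_le_pos|apply Rmult_le_compat]; lra.
Qed.

Lemma nonneg_nondecreasing_pow (F : R -> R) (k : nat) :
  nonneg_nondecreasing F -> nonneg_nondecreasing (fun u => F u ^ k).
Proof.
  intros HF x y Hxy. destruct (HF x y Hxy).
  split; [apply pow_le|apply pow_incr]; lra.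
Qed.

Lemma nonneg_nondecreasing_const (a : R) : 0 <= a -> nonneg_nondecreasing (fun _ => a).
Proof. intros Ha x y _. lra. Qed.

Lemma nonneg_nondecreasing_half (F : R -> R) :
  nonneg_nondecreasing F -> nonneg_nondecreasing (fun u => F (u / 2)).
Proof. intros HF x y Hxy. apply HF. lra. Qed.

Lemma nonneg_nondecreasing_id : nonneg_nondecreasing (fun u => u).
Proof. intros x y Hxy. lra. Qed.

Lemma sinh_le (x y : R) : x <= y -> sinh x <= sinh y.
Proof.
  intros Hxy. destruct (Req_dec x y) as [->|]; [lra|]. left. apply sinh_lt. lra.
Qed.

Lemma sinh_pos (x : R) : 0 < x -> 0 < sinh x.
Proof. intros Hx. rewrite <- sinh_0. apply sinh_lt. exact Hx. Qed.

Lemma cosh_pos (x : R) : 0 < cosh x.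
Proof. unfold cosh. pose proof (exp_pos x). pose proof (exp_pos (- x)). lra. Qed.

Lemma nonneg_nondecreasing_sinh : nonneg_nondecreasing sinh.
Proof.
  intros x y Hxy. rewrite <- sinh_0. split; apply sinh_le; lra.
Qed.

Lemma nonneg_nondecreasing_cosh : nonneg_nondecreasing cosh.
Proof.
  intros x y Hxy. split; [left; apply cosh_pos|].
  apply (derivative_nonneg_le cosh sinh); [lra|intros t _; apply derivable_pt_lim_cosh|].
  intros t Ht. apply (nonneg_nondecreasing_sinh t t). lra.
Qed.

Lemma DM_pos (M : ModelSpace) (n : nat) (u : R) : 0 < u -> 0 < DM M n u.
Proof.
  intros Hu. pose proof (sinh_pos u Hu). pose proof (sinh_pos (u / 2) ltac:(lra)).
  destruct M; unfold DM;
    try apply Rmult_lt_0_compat; try apply Rmult_lt_0_compat;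
    apply pow_lt; auto using cosh_pos; lra.
Qed.

Lemma DM_nonneg_nondecreasing (M : ModelSpace) (n : nat) :
  nonneg_nondecreasing (DM M n).
Proof.
  destruct M; unfold DM;
    try (apply nonneg_nondecreasing_mult; [apply nonneg_nondecreasing_mult|]);
    auto using nonneg_nondecreasing_pow, nonneg_nondecreasing_id, nonneg_nondecreasing_sinh,
      nonneg_nondecreasing_half, nonneg_nondecreasing_cosh;
    apply nonneg_nondecreasing_const, pow_le; lra.
Qed.

Theorem lemma3p1 (M : ModelSpace) (n : nat) (hn : valid_dim M n)
    (h h1 h2 : R -> R -> R)
    (Hsol : forall r, 0 < r -> blowup_solution M n r (h r) (h1 r) (h2 r)) :
  (forall r s, 0 < r -> r < s -> h s 0 < h r 0) /\
  (forall K, exists R0, forall r, R0 < r -> h r 0 < K).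
Proof.
  (* The argument works for every n. *)
  pose proof (blowup_solution_value_at_0_scaling (DM M n) (n - 1) (DM_pos M n)
    (DM_nonneg_nondecreasing M n)) as Hscale.
  assert (Hexp : 1 <= INR (S (S (n - 1)))) by (apply (le_INR 1); lia).
  split.
  - intros r s Hr Hrs.
    set (c := (r + s) / (2 * r)).
    assert (Hc : 1 < c) by (unfold c; apply Rmult_lt_reg_r with (2 * r); field_simplify; lra).
    assert (Hcr : c * r < s) by (unfold c; field_simplify; lra).
    pose proof (Hscale r s c (h r) (h1 r) (h2 r) (h s) (h1 s) (h2 s) Hr
      (Hsol r Hr) (Hsol s ltac:(lra)) ltac:(lra) Hcr).
    assert (0 < ln c) by (rewrite <- ln_1; apply ln_increasing; lra).
    nra.
  - intros K. set (L := Rabs (h 1 0 - K) + 1).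
    assert (HL : h 1 0 - K < L) by (pose proof (Rle_abs (h 1 0 - K)); unfold L; lra).
    assert (Hc : 1 <= exp L) by (pose proof (exp_ineq1 L); pose proof (Rabs_pos (h 1 0 - K)); unfold L in *; lra).
    exists (exp L). intros r Hr.
    pose proof (Hscale 1 r (exp L) (h 1) (h1 1) (h2 1) (h r) (h1 r) (h2 r) Rlt_0_1
      (Hsol 1 Rlt_0_1) (Hsol r ltac:(lra)) Hc ltac:(lra)).
    rewrite ln_exp in *. assert (0 < L) by (pose proof (Rabs_pos (h 1 0 - K)); unfold L; lra).
    nra.
Qed.
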